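(* For every delay function $\mathbf{d}$ it holds that $E_{C(\mathbf{d})}=E_{\mathcal{M}(\mathbf{d})}$. Consequently $\inf_{\mathbf{d}}E_{C(\mathbf{d})}=\inf_{\mathbf{d}}E_{\mathcal{M}(\mathbf{d})}$.
   Context: $C=(S,\lambda,\mathrm{P},S_{fd},\mathrm{F},s_{in})$ is a fdCTMC structure: $S$ finite, $\lambda>0$, $\mathrm{P}\in\mathbb{R}_{\ge0}^{S\times S}$ and $\mathrm{F}\in\mathbb{R}_{\ge0}^{S_{fd}\times S}$ stochastic, $S_{fd}\subseteq S$, $s_{in}\in S$. For a delay function $\mathbf{d}:S_{fd}\to\mathbb{R}_{>0}$, the fdCTMC $C(\mathbf{d})$ has runs $(s_0,d_0)t_0(s_1,d_1)t_1\cdots$ with $s_0=s_{in}$, $d_0=\mathbf{d}(s_0)$ if $s_0\in S_{fd}$, else $\infty$; from $(s_i,d_i)$ an $\mathrm{Exp}(\lambda)$ time is sampled; if it is $t_i<d_i$, $s_{i+1}\sim\mathrm{P}(s_i,\cdot)$ and $d_{i+1}=d_i-t_i$ if $s_i,s_{i+1}\in S_{fd}$, $=\mathbf{d}(s_{i+1})$ if $s_{i+1}\in S_{fd},s_i\notin S_{fd}$, $=\infty$ if $s_{i+1}\notin S_{fd}$ (exp-delay transition); otherwise $t_i=d_i$, $s_{i+1}\sim\mathrm{F}(s_i,\cdot)$, $d_{i+1}=\mathbf{d}(s_{i+1})$ if $s_{i+1}\in S_{fd}$, else $\infty$ (fixed-delay transition). A cost structure $\mathit{Cost}=(G,\mathcal{R},\mathcal{I}_{\mathrm{P}},\mathcal{I}_{\mathrm{F}})$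 has goal set $G\subseteq S$, rates $\mathcal{R}:S\to\mathbb{R}_{\ge0}$, impulse costs $\mathcal{I}_{\mathrm{P}},\mathcal{I}_{\mathrm{F}}:S\times S\to\mathbb{R}_{\ge0}$; the total cost of a run is $\sum_{i<n}(t_i\mathcal{R}(s_i)+I_i)$ for the least $n>0$ with $s_n\in G$ ($\infty$ if none), $I_i$ being $\mathcal{I}_{\mathrm{P}}(s_i,s_{i+1})$ or $\mathcal{I}_{\mathrm{F}}(s_i,s_{i+1})$ for exp-/fixed-delay transitions; $E_{C(\mathbf{d})}$ is its expectation (with a different goal set $G'$ we write $E^{\mathit{Cost}[G']}$). Standing assumption: $S_{fd}=S^{reset}\uplus S^{keep}$ where $s'\in S^{reset}$ iff $\mathrm{P}(s,s')>0$ for some $s\in S\setminus S_{fd}$ or $\mathrm{F}(s,s')>0$ for some $s\in S_{fd}$, and $s'\in S^{keep}$ iff $\mathrm{P}(s,s')>0$ for some $s\in S_{fd}$ (these are disjoint); moreover $s_{in}\in S^{reset}$ if $s_{in}\in S_{fd}$. Let $S'=S^{reset}\cup(S\setminus S_{fd})\cup G$. The DTMDP $\mathcal{M}$ has vertices $S'$, initial vertex $s_{in}$, goal vertices $G$, actions $\mathbb{R}_{>0}\cup\{\infty\}$, where positive reals are enabled in $S^{reset}$ and $\infty$ in $S\setminus S_{fd}$. For $s\in S'$ and enabled action $d$, let $C[s](d)$ be $C$ with initial state $s$ and any delay function assigning $d$ to $s$; the transition probability $T(s,d)(s')$ is the probability in $C[s](d)$ that the first state of $S'$ visited after at least one transition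 is $s'$, and the one-step cost $c(s,d)=E^{\mathit{Cost}[S']}_{C[s](d)}$. A delay function $\mathbf{d}$ acts as a memoryless strategy of $\mathcal{M}$ (choosing $\mathbf{d}(s)$ in $s\in S^{reset}$ and $\infty$ in $S\setminus S_{fd}$), and $E_{\mathcal{M}(\mathbf{d})}$ is the expected sum of one-step costs accumulated from $s_{in}$ before reaching $G$ ($\infty$ if $G$ is not reached). *)

From HB Require Import structures.
From mathcomp Require Import all_boot all_order all_algebra.
From mathcomp Require Import all_classical all_reals all_analysis.

Set Implicit Arguments.
Unset Strict Implicit.
Unset Printing Implicit Defensive.

Import Order.TTheory GRing.Theory Num.Theory.
Local Open Scope ring_scope.
Local Open Scope classical_set_scope.

Record fdCTMC (R : realType) (S : finType) := FdCTMC {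
  lam  : R;
  Pm   : S -> S -> R;        (* exp-delay transition matrix *)
  Sfd  : {set S};
  Fm   : S -> S -> R;        (* fixed-delay transition matrix (rows in S_fd) *)
  sin  : S
}.

Record costStruct (R : realType) (S : finType) := CostStruct {
  Goal : {set S};
  Rate : S -> R;
  IP   : S -> S -> R;
  IF   : S -> S -> R
}.

Section Defs.
Variables (R : realType) (S : finType).
Variable C : fdCTMC R S.
Variable K : costStruct R S.

Local Notation mu := (@lebesgue_measure R).

Definition fdCTMC_wf : Prop :=
  0 < lam C /\
  (forall s s', 0 <= Pm C s s') /\ (forall s, \sum_(s' : S) Pm C s s' = 1) /\
  (forall s s', s \in Sfd C -> 0 <= Fm C s s') /\
  (forall s, s \in Sfd C -> \sum_(s' : S) Fm C s s' = 1).

Definition cost_wf : Prop :=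
  (forall s, 0 <= Rate K s) /\ (forall s s', 0 <= IP K s s') /\
  (forall s s', 0 <= IF K s s').

Definition Sreset (s' : S) : bool :=
  (s' \in Sfd C) &&
  ([exists s, (s \notin Sfd C) && (0 < Pm C s s')] ||
   [exists s, (s \in Sfd C) && (0 < Fm C s s')]).

Definition Skeep (s' : S) : bool :=
  (s' \in Sfd C) && [exists s, (s \in Sfd C) && (0 < Pm C s s')].

Definition standing_assumption : Prop :=
  (forall s, s \in Sfd C -> Sreset s || Skeep s) /\
  (forall s, ~~ (Sreset s && Skeep s)) /\
  (sin C \in Sfd C -> Sreset (sin C)).

(* delay functions: d : S -> R, positive on S_fd (values off S_fd unused) *)
Definition delay_fun (d : S -> R) : Prop := forall s, s \in Sfd C -> 0 < d s.

Definition Sprime : pred S :=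
  fun s => Sreset s || (s \notin Sfd C) || (s \in Goal K).

Local Open Scope ereal_scope.

(* initial remaining delay of a state s under delay function D *)
Definition init_delay (D : S -> R) (s : S) : \bar R :=
  if s \in Sfd C then (D s)%:E else +oo.

(* remaining delay after an exp-delay transition s -> s' at time t *)
Definition delay_exp (D : S -> R) (s : S) (dl : \bar R) (t : R) (s' : S)
  : \bar R :=
  if s' \in Sfd C then (if s \in Sfd C then dl - t%:E else (D s')%:E)
  else +oo.

Definition delay_fix (D : S -> R) (s' : S) : \bar R :=
  if s' \in Sfd C then (D s')%:E else +oo.

(* One step of C(D) from configuration (s, dl): expectation of
   g t s' dl' fixed, where t is the time spent, s' the next state,
   dl' the next remaining delay and fixed tells whether the transition
   was a fixed-delay one.  The waiting time is Exp(lam); if it is < dl an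
   exp-delay transition (via P) happens, otherwise at time dl a
   fixed-delay transition (via F). *)
Definition stepE (D : S -> R) (g : R -> S -> \bar R -> bool -> \bar R)
  (s : S) (dl : \bar R) : \bar R :=
  let expPart (t : R) :=
    (lam C * expR (- (lam C * t)))%:E *
    \sum_(s' : S) ((Pm C s s')%:E * g t s' (delay_exp D s dl t s') false) in
  match dl with
  | EFin r =>
      (\int[mu]_(t in [set t : R | (0 <= t)%R && (t < r)%R]) expPart t) +
      (expR (- (lam C * r)))%:E *
        \sum_(s' : S) ((Fm C s s')%:E * g r s' (delay_fix D s') true)
  | _ => \int[mu]_(t in [set t : R | (0 <= t)%R]) expPart t
  end.

Definition trans_cost (s : S) (t : R) (s' : S) (fixed : bool) : \bar R :=
  (t * Rate K s + (if fixed then IF K s s' else IP K s s'))%:E.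

(* expected cost accumulated during the first n transitions, stopping
   at the first visit (after >= 1 transition) of the goal set Gs *)
Fixpoint costN (D : S -> R) (Gs : pred S) (n : nat) (s : S) (dl : \bar R)
  : \bar R :=
  match n with
  | O => 0
  | n'.+1 => stepE D (fun t s' dl' fx =>
              trans_cost s t s' fx + (if Gs s' then 0 else costN D Gs n' s' dl'))
            s dl
  end.

Fixpoint reachN (D : S -> R) (Gs : pred S) (n : nat) (s : S) (dl : \bar R)
  : \bar R :=
  match n with
  | O => 0
  | n'.+1 => stepE D (fun t s' dl' fx =>
              if Gs s' then 1 else reachN D Gs n' s' dl') s dl
  end.

Fixpoint hitN (D : S -> R) (Gs : pred S) (x : S) (n : nat) (s : S)
  (dl : \bar R) : \bar R :=
  match n with
  | O => 0
  | n'.+1 => stepE D (fun t s' dl' fx =>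
              if Gs s' then (if s' == x then 1 else 0)
              else hitN D Gs x n' s' dl') s dl
  end.

(* expected total cost from configuration (s, dl) with goal set Gs:
   +oo if Gs is not reached with probability 1 (the total cost of a run
   not reaching Gs is +oo), else the limit of the partial expectations *)
Definition ExpCostFrom (D : S -> R) (Gs : pred S) (s : S) (dl : \bar R)
  : \bar R :=
  if ereal_sup (range (fun n => reachN D Gs n s dl)) < 1 then +oo
  else ereal_sup (range (fun n => costN D Gs n s dl)).

Definition ExpCost (D : S -> R) (Gs : pred S) (s : S) : \bar R :=
  ExpCostFrom D Gs s (init_delay D s).

Definition E_C (d : S -> R) : \bar R :=
  ExpCost d (fun s => s \in Goal K) (sin C).

(* actions: reals (for S^reset) and +oo (for S \ S_fd), as \bar R.
   C[s](a): C with initial state s and a delay function assigning a to s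
   (value 1 elsewhere; irrelevant) *)
Definition delay_at (s : S) (a : \bar R) : S -> R :=
  fun x => if x == s then (if a is EFin r then r else 1%R) else 1%R.

Definition Tm (s : S) (a : \bar R) (s' : S) : \bar R :=
  ereal_sup (range (fun n =>
    hitN (delay_at s a) Sprime s' n s (init_delay (delay_at s a) s))).

Definition cm (s : S) (a : \bar R) : \bar R :=
  ExpCost (delay_at s a) Sprime s.

Definition strat (d : S -> R) (s : S) : \bar R :=
  if s \in Sfd C then (d s)%:E else +oo.

Fixpoint costM (d : S -> R) (n : nat) (s : S) : \bar R :=
  match n with
  | O => 0
  | n'.+1 => cm s (strat d s) +
      \sum_(s' : S | Sprime s')
        Tm s (strat d s) s' * (if s' \in Goal K then 0 else costM d n' s')
  end.

Fixpoint reachM (d : S -> R) (n : nat) (s : S) : \bar R :=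
  match n with
  | O => 0
  | n'.+1 => \sum_(s' : S | Sprime s')
        Tm s (strat d s) s' * (if s' \in Goal K then 1 else reachM d n' s')
  end.

Definition E_M (d : S -> R) : \bar R :=
  if ereal_sup (range (fun n => reachM d n (sin C))) < 1 then +oo
  else ereal_sup (range (fun n => costM d n (sin C))).

End Defs.

(* For a set G of states, a transition cost c and a reward h paid at the first
   visit to G, the n-step expected cost of C(d) is an iterate of the one-step operator
   [stepE]; the cost, reachability and hitting quantities of C and of M are all of this
   form. Under the standing assumption every transition into a state of S' \ G starts the
   delay of that state afresh (an exp-delay transition into S^reset comes from outside
   S_fd, a fixed-delay transition always resets), so the run continues as a fresh run of
   C(d): this is the strong Markov property at the visits to S'. As the reward enters
   linearly, cutting runs at their visits to S' bounds the n-step costs of C(d) by those of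
   M(d) and conversely bounds those of M(d) by the value of C(d) via its Bellman inequality.
   Both models therefore reach G with the same probability. When it is 1, so it is from
   every state of S' \ G visited with positive probability; there the one-step cost of M,
   which is +oo unless S' is reached almost surely, is the cost of C(d) up to S', and the
   expected costs coincide. *)

From Pilot Require Import Defs.
From HB Require Import structures.
From mathcomp Require Import all_boot all_order all_algebra.
From mathcomp Require Import all_classical all_reals all_analysis.
From mathcomp Require Import measurable_realfun exponential_distribution.

Set Implicit Arguments.
Unset Strict Implicit.
Unset Printing Implicit Defensive.

Import Order.TTheory GRing.Theory Num.Theory.
Local Open Scope ring_scope.
Local Open Scope classical_set_scope.
Local Open Scope ereal_scope.

(** * Suprema of nondecreasing sequences *)

Section NondecreasingSup.
Variable R : realType.
Implicit Types u v : (\bar R)^nat.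

Lemma ereal_sup_cvg u l : nondecreasing_seq u -> u @ \oo --> l ->
  ereal_sup (range u) = l.
Proof. by move=> nd; exact: cvg_unique _ (ereal_nondecreasing_cvgn nd). Qed.

Lemma ereal_sup_range_ub u n : u n <= ereal_sup (range u).
Proof. by apply: ereal_sup_ubound; exists n. Qed.

Lemma ereal_sup_range_ge0 u : (forall n, 0 <= u n) -> 0 <= ereal_sup (range u).
Proof. by move=> u0; exact: le_trans (u0 0%N) (ereal_sup_range_ub u 0). Qed.

Lemma ereal_sup_range_le u M : (forall n, u n <= M) -> ereal_sup (range u) <= M.
Proof. by move=> uM; apply: ge_ereal_sup => _ [n _ <-]. Qed.

Lemma le_ereal_sup_range u v : (forall n, u n <= v n) ->
  ereal_sup (range u) <= ereal_sup (range v).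
Proof.
by move=> uv; apply: ereal_sup_range_le => n; exact: le_trans (uv n) (ereal_sup_range_ub v n).
Qed.

Lemma ereal_sup_range_cst (a : \bar R) : ereal_sup (range (fun _ : nat => a)) = a.
Proof. by apply: ereal_sup_cvg => //; exact: cvg_cst. Qed.

Lemma ereal_sup_rangeD u v : nondecreasing_seq u -> nondecreasing_seq v ->
  (forall n, 0 <= u n) -> (forall n, 0 <= v n) ->
  ereal_sup (range (fun n => u n + v n)) = ereal_sup (range u) + ereal_sup (range v).
Proof.
move=> ndu ndv u0 v0; apply: ereal_sup_cvg.
  by move=> m n mn; apply: leeD; [exact: ndu|exact: ndv].
apply: cvgeD; last 2 first.
- exact: ereal_nondecreasing_cvgn.
- exact: ereal_nondecreasing_cvgn.
by apply: ge0_adde_def; rewrite inE; exact: ereal_sup_range_ge0.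
Qed.

Lemma ereal_sup_rangeM u v : nondecreasing_seq u -> nondecreasing_seq v ->
  (forall n, 0 <= u n) -> (forall n, 0 <= v n) -> (forall n, u n <= 1) ->
  ereal_sup (range (fun n => u n * v n)) = ereal_sup (range u) * ereal_sup (range v).
Proof.
move=> ndu ndv u0 v0 u1.
have su1 : ereal_sup (range u) <= 1 by exact: ereal_sup_range_le.
have [su0|su_gt0] := eqVneq (ereal_sup (range u)) 0.
  have uz n : u n = 0.
    by apply/eqP; rewrite eq_le u0 andbT -su0; exact: ereal_sup_range_ub.
  have -> : (fun n => u n * v n) = fun=> 0 by apply: funext => n; rewrite uz mul0e.
  by rewrite su0 mul0e ereal_sup_range_cst.
apply: ereal_sup_cvg.
  by move=> m n mn; apply: lee_pmul => //; [exact: ndu|exact: ndv].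
apply: cvgeM; last 2 first.
- exact: ereal_nondecreasing_cvgn.
- exact: ereal_nondecreasing_cvgn.
move: su_gt0 su1 (ereal_sup_range_ge0 u0).
case: (ereal_sup (range u)) => // a a0 _ _.
by case: (ereal_sup (range v)) => // *; rewrite /mule_def /= a0.
Qed.

Lemma ereal_sup_range_sum (I : finType) (P : pred I) (u : I -> (\bar R)^nat) :
  (forall i, nondecreasing_seq (u i)) -> (forall i n, 0 <= u i n) ->
  ereal_sup (range (fun n => \sum_(i | P i) u i n)) =
  \sum_(i | P i) ereal_sup (range (u i)).
Proof.
move=> nd u0; apply: ereal_sup_cvg.
  by move=> m n mn; apply: lee_sum => i _; exact: nd.
apply: cvg_nnesum => i _; first exact: nearW.
exact: ereal_nondecreasing_cvgn.
Qed.

End NondecreasingSup.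

Section NonnegativeSums.
Variables (R : realType) (I J : finType).

Lemma ge0_weighted_sum_lin (a : \bar R) (w u0 : J -> \bar R) (k : I -> \bar R)
    (u : I -> J -> \bar R) :
  0 <= a -> (forall j, 0 <= w j) -> (forall j, 0 <= u0 j) -> (forall i, 0 <= k i) ->
  (forall i j, 0 <= u i j) ->
  a * \sum_j (w j * (u0 j + \sum_i k i * u i j)) =
  a * \sum_j (w j * u0 j) + \sum_i k i * (a * \sum_j (w j * u i j)).
Proof.
move=> a0 w0 u00 k0 u_ge0.
have wu0 i j : 0 <= w j * u i j by exact: mule_ge0.
have distr j : w j * (u0 j + \sum_i k i * u i j) =
    w j * u0 j + \sum_i k i * (w j * u i j).
  rewrite ge0_muleDr //; last by apply: sume_ge0 => i _; exact: mule_ge0.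
  rewrite ge0_sume_distrr; last by move=> i _; exact: mule_ge0.
  by congr (_ + _); apply: eq_bigr => i _; rewrite muleCA.
rewrite (eq_bigr _ (fun j _ => distr j)) big_split /= exchange_big /=.
rewrite ge0_muleDr; first last.
- by apply: sume_ge0 => i _; apply: sume_ge0 => j _; exact: mule_ge0.
- by apply: sume_ge0 => j _; exact: mule_ge0.
congr (_ + _); rewrite ge0_sume_distrr; last first.
  by move=> i _; apply: sume_ge0 => j _; exact: mule_ge0.
apply: eq_bigr => i _; rewrite -ge0_sume_distrr; last by move=> j _.
by rewrite muleCA.
Qed.

End NonnegativeSums.

Section Semantics.
Variables (R : realType) (S : finType) (C : fdCTMC R S) (K : costStruct R S).
Hypothesis HC : fdCTMC_wf C.
Local Notation mu := (@lebesgue_measure R).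
Local Notation SF := (Sfd C).
Implicit Types (D : S -> R) (s x : S) (dl : \bar R).

(** * One transition of C(D) *)

Lemma lam_gt0 : (0 < lam C)%R. Proof. by case: HC. Qed.

Lemma Pm_ge0 s s' : (0 <= Pm C s s')%R.
Proof. by case: HC => _ [+ _]; apply. Qed.

Lemma sum_Pm s : (\sum_(s' : S) Pm C s s' = 1)%R.
Proof. by case: HC => _ [_ [+ _]]; apply. Qed.

Lemma Fm_ge0 s s' : s \in SF -> (0 <= Fm C s s')%R.
Proof. by case: HC => _ [_ [_ [+ _]]]; apply. Qed.

Lemma sum_Fm s : s \in SF -> (\sum_(s' : S) Fm C s s' = 1)%R.
Proof. by case: HC => _ [_ [_ [_ +]]]; apply. Qed.

Lemma exp_density_ge0 t : (0 <= lam C * expR (- (lam C * t)))%R.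
Proof. by rewrite mulr_ge0 ?expR_ge0 // ltW // lam_gt0. Qed.

Lemma measurable_exp_density :
  measurable_fun setT (fun t : R => (lam C * expR (- (lam C * t)))%:E).
Proof.
apply/measurable_EFinP; apply: measurable_funM => //.
apply: measurableT_comp; first exact: measurable_expR.
by apply: measurableT_comp => //; exact: measurable_funM.
Qed.

(* Possible firing times of the exponential clock before the fixed delay [dl] runs out. *)
Definition wait_dom dl : set R :=
  if dl is r%:E then [set t | (0 <= t)%R && (t < r)%R] else [set t | (0 <= t)%R].

Lemma wait_dom_ge0 dl t : wait_dom dl t -> (0 <= t)%R.
Proof. by case: dl => [r /andP[]| |]. Qed.

Lemma measurable_wait_dom dl : measurable (wait_dom dl).
Proof.
have ->: wait_dom dl = if dl is r%:E then `[0%R, r[%classic else `[0%R, +oo[%classic.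
  by case: dl => [r| |]; apply/seteqP; split => t /=; rewrite in_itv /= ?andbT.
by case: dl => *; exact: measurable_itv.
Qed.

Definition exp_part D (g : R -> S -> \bar R -> bool -> \bar R) s dl t :=
  (lam C * expR (- (lam C * t)))%:E *
    \sum_(s' : S) ((Pm C s s')%:E * g t s' (delay_exp C D s dl t s') false).

Definition fix_part D (g : R -> S -> \bar R -> bool -> \bar R) s r :=
  (expR (- (lam C * r)))%:E *
    \sum_(s' : S) ((Fm C s s')%:E * g r s' (delay_fix C D s') true).

Lemma stepE_split D g s dl : stepE C D g s dl =
  \int[mu]_(t in wait_dom dl) exp_part D g s dl t +
  (if dl is r%:E then fix_part D g s r else 0).
Proof. by case: dl => *; rewrite ?adde0. Qed.

(* The configurations [(s, dl)] that occur along runs of [C(D)]. *)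
Definition wf_config s dl :=
  dl = +oo \/ exists2 r, dl = r%:E & (0 <= r)%R /\ s \in SF.

Lemma wf_config_fin s r : wf_config s r%:E -> (0 <= r)%R /\ s \in SF.
Proof. by case=> [//|[r' [<-]]]. Qed.

Lemma wf_config_init D s : delay_fun C D -> wf_config s (init_delay C D s).
Proof.
move=> HD; rewrite /init_delay; case: ifPn => sF; last by left.
by right; exists (D s) => //; split => //; exact/ltW/HD.
Qed.

Lemma wf_config_fix D s' : delay_fun C D -> wf_config s' (delay_fix C D s').
Proof. exact: wf_config_init. Qed.

Lemma wf_config_delay_exp D s dl t s' : delay_fun C D -> dl != -oo ->
  wait_dom dl t -> wf_config s' (delay_exp C D s dl t s').
Proof.
move=> HD; rewrite /delay_exp; case: ifPn => s'F; last by left.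
case: ifPn => sF; first last.
  by move=> _ _; right; exists (D s') => //; split => //; exact/ltW/HD.
case: dl => [r _ /andP[_ tr]| |] //; last by left.
by right; exists (r - t)%R => //; rewrite subr_ge0 ltW.
Qed.

Lemma wf_config_exp D s dl t s' : delay_fun C D -> wf_config s dl ->
  wait_dom dl t -> wf_config s' (delay_exp C D s dl t s').
Proof. by move=> HD [->|[r -> _]]; exact: wf_config_delay_exp. Qed.

Lemma eq_stepE D1 D2 g1 g2 s dl :
  (forall t, wait_dom dl t -> forall s', Pm C s s' != 0%R ->
     g1 t s' (delay_exp C D1 s dl t s') false =
     g2 t s' (delay_exp C D2 s dl t s') false) ->
  (forall r, dl = r%:E -> forall s', Fm C s s' != 0%R ->
     g1 r s' (delay_fix C D1 s') true = g2 r s' (delay_fix C D2 s') true) ->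
  stepE C D1 g1 s dl = stepE C D2 g2 s dl.
Proof.
move=> He Hf; rewrite !stepE_split; congr (_ + _).
  apply: eq_integral => t /[!inE] Ht; congr (_ * _); apply: eq_bigr => s' _.
  by have [->|nz] := eqVneq (Pm C s s') 0%R; rewrite ?mul0e // He.
case: dl He Hf => // r _ Hf; congr (_ * _); apply: eq_bigr => s' _.
by have [->|nz] := eqVneq (Fm C s s') 0%R; rewrite ?mul0e // (Hf r).
Qed.

Lemma stepE0 D s dl : stepE C D (fun _ _ _ _ => 0) s dl = 0.
Proof.
rewrite stepE_split (eq_integral (cst 0)) ?integral0 ?add0e.
  by case: dl => // r; rewrite /fix_part big1 ?mule0 // => y _; rewrite mule0.
by move=> t _; rewrite /exp_part big1 ?mule0 // => y _; rewrite mule0.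
Qed.

Lemma exp_part_ge0 D g s dl t :
  (forall s', 0 <= g t s' (delay_exp C D s dl t s') false) ->
  0 <= exp_part D g s dl t.
Proof.
move=> g0; apply: mule_ge0; first by rewrite lee_fin exp_density_ge0.
by apply: sume_ge0 => s' _; apply: mule_ge0; rewrite ?lee_fin ?Pm_ge0.
Qed.

Lemma integral_exp_part_le_pdf D g s dl :
  (forall t, wait_dom dl t -> forall s', 0 <= g t s' (delay_exp C D s dl t s') false) ->
  (forall t, wait_dom dl t -> forall s', g t s' (delay_exp C D s dl t s') false <= 1) ->
  measurable_fun (wait_dom dl) (exp_part D g s dl) ->
  \int[mu]_(t in wait_dom dl) exp_part D g s dl t <=
  \int[mu]_(t in wait_dom dl) (exponential_pdf (lam C) t)%:E.
Proof.
move=> g0 g1 mg; have pdf0 t : 0 <= (exponential_pdf (lam C) t)%:E.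
  by rewrite lee_fin exponential_pdf_ge0 // ltW // lam_gt0.
apply: ge0_le_integral => //; first exact: measurable_wait_dom.
- by move=> t Ht; apply: exp_part_ge0; exact: g0.
- by apply/measurable_funTS/measurable_EFinP; exact: measurable_exponential_pdf.
move=> t Ht; rewrite exponential_pdfE ?(wait_dom_ge0 Ht) // mulNr.
rewrite -[leRHS]mule1; apply: lee_wpmul2l; first by rewrite lee_fin exp_density_ge0.
apply: le_trans (_ : \sum_(s' : S) (Pm C s s')%:E * 1 <= _); last first.
  by under eq_bigr do rewrite mule1; rewrite sumEFin sum_Pm.
apply: lee_sum => s' _; have [->|nz] := eqVneq (Pm C s s') 0%R; first by rewrite !mul0e.
by apply: lee_wpmul2l; [rewrite lee_fin Pm_ge0|exact: g1].
Qed.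

Lemma fix_part_le1 D g s r : s \in SF ->
  (forall s', g r s' (delay_fix C D s') true <= 1) ->
  fix_part D g s r <= (expR (- (lam C * r)))%:E.
Proof.
move=> sF g1; rewrite -[leRHS]mule1; apply: lee_wpmul2l; first by rewrite lee_fin expR_ge0.
apply: le_trans (_ : \sum_(s' : S) (Fm C s s')%:E * 1 <= _); last first.
  by under eq_bigr do rewrite mule1; rewrite sumEFin sum_Fm.
apply: lee_sum => s' _; have [->|nz] := eqVneq (Fm C s s') 0%R; first by rewrite !mul0e.
by apply: lee_wpmul2l; [rewrite lee_fin Fm_ge0|exact: g1].
Qed.

Lemma integral_exp_part_lin D g0 (gx : S -> R -> S -> \bar R -> bool -> \bar R)
    (k : S -> \bar R) s dl :
  (forall x, 0 <= k x) ->
  (forall t, wait_dom dl t -> forall s', 0 <= g0 t s' (delay_exp C D s dl t s') false) ->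
  (forall x t, wait_dom dl t -> forall s',
     0 <= gx x t s' (delay_exp C D s dl t s') false) ->
  measurable_fun (wait_dom dl) (exp_part D g0 s dl) ->
  (forall x, measurable_fun (wait_dom dl) (exp_part D (gx x) s dl)) ->
  \int[mu]_(t in wait_dom dl) exp_part D
      (fun t s' dl' fx => g0 t s' dl' fx + \sum_x k x * gx x t s' dl' fx) s dl t =
  \int[mu]_(t in wait_dom dl) exp_part D g0 s dl t +
  \sum_x k x * \int[mu]_(t in wait_dom dl) exp_part D (gx x) s dl t.
Proof.
move=> k0 g0e gxe m0 mx.
have e0 t : wait_dom dl t -> 0 <= exp_part D g0 s dl t.
  by move=> Ht; apply: exp_part_ge0; exact: g0e.
have ex x t : wait_dom dl t -> 0 <= exp_part D (gx x) s dl t.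
  by move=> Ht; apply: exp_part_ge0; exact: gxe.
have ekx t : wait_dom dl t -> 0 <= \sum_x k x * exp_part D (gx x) s dl t.
  by move=> Ht; apply: sume_ge0 => x _; apply: mule_ge0 => //; exact: ex.
have kx0 x t : wait_dom dl t -> 0 <= k x * exp_part D (gx x) s dl t.
  by move=> Ht; apply: mule_ge0 => //; exact: ex.
have mkx x : measurable_fun (wait_dom dl) (fun t => k x * exp_part D (gx x) s dl t).
  exact: emeasurable_funM.
transitivity (\int[mu]_(t in wait_dom dl)
    (exp_part D g0 s dl t + \sum_x k x * exp_part D (gx x) s dl t)).
  apply: eq_integral => t /[!inE] Ht; apply: ge0_weighted_sum_lin => //.
  - by rewrite lee_fin exp_density_ge0.
  - by move=> y; rewrite lee_fin Pm_ge0.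
  - by move=> y; exact: g0e.
  - by move=> x y; exact: gxe.
rewrite (ge0_integralD mu (measurable_wait_dom dl) e0 m0 ekx); last first.
  exact: emeasurable_sum.
congr (_ + _); rewrite (ge0_integral_sum mu (measurable_wait_dom dl) mkx kx0).
apply: eq_bigr => x _.
by rewrite (ge0_integralZl mu (measurable_wait_dom dl) (mx x)) //; exact: ex.
Qed.

Section StepBounds.
Variables (D : S -> R) (s : S) (dl : \bar R).
Hypothesis Hdl : wf_config s dl.

Let wf_config_finE r : dl = r%:E -> (0 <= r)%R /\ s \in SF.
Proof. by move=> Er; apply: wf_config_fin; rewrite -Er. Qed.

Lemma fix_part_ge0 g r : dl = r%:E ->
  (forall s', 0 <= g r s' (delay_fix C D s') true) -> 0 <= fix_part D g s r.
Proof.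
move=> Er g0; have [_ sF] := wf_config_finE Er.
apply: mule_ge0; first by rewrite lee_fin expR_ge0.
by apply: sume_ge0 => s' _; apply: mule_ge0; rewrite ?lee_fin ?Fm_ge0.
Qed.

Lemma stepE_ge0 g :
  (forall t, wait_dom dl t -> forall s', 0 <= g t s' (delay_exp C D s dl t s') false) ->
  (forall r, dl = r%:E -> forall s', 0 <= g r s' (delay_fix C D s') true) ->
  0 <= stepE C D g s dl.
Proof.
move=> ge gf; rewrite stepE_split; apply: adde_ge0.
  by apply: integral_ge0 => t Ht; apply: exp_part_ge0; exact: ge.
by case E: dl => //; apply: fix_part_ge0 => //; exact: gf.
Qed.

Lemma le_stepE g1 g2 :
  (forall t, wait_dom dl t -> forall s', 0 <= g1 t s' (delay_exp C D s dl t s') false) ->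
  measurable_fun (wait_dom dl) (exp_part D g1 s dl) ->
  measurable_fun (wait_dom dl) (exp_part D g2 s dl) ->
  (forall t, wait_dom dl t -> forall s', Pm C s s' != 0%R ->
     g1 t s' (delay_exp C D s dl t s') false <= g2 t s' (delay_exp C D s dl t s') false) ->
  (forall r, dl = r%:E -> forall s', Fm C s s' != 0%R ->
     g1 r s' (delay_fix C D s') true <= g2 r s' (delay_fix C D s') true) ->
  stepE C D g1 s dl <= stepE C D g2 s dl.
Proof.
move=> g10 m1 m2 He Hf; rewrite !stepE_split; apply: leeD.
  apply: ge0_le_integral => //; first exact: measurable_wait_dom.
    by move=> t Ht; apply: exp_part_ge0; exact: g10.
  move=> t Ht; apply: lee_wpmul2l; first by rewrite lee_fin exp_density_ge0.
  apply: lee_sum => s' _; have [->|nz] := eqVneq (Pm C s s') 0%R; first by rewrite !mul0e.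
  by apply: lee_wpmul2l; [rewrite lee_fin Pm_ge0|exact: He].
case E: dl => [r| |] //; have [_ sF] := wf_config_finE E.
apply: lee_wpmul2l; first by rewrite lee_fin expR_ge0.
apply: lee_sum => s' _; have [->|nz] := eqVneq (Fm C s s') 0%R; first by rewrite !mul0e.
by apply: lee_wpmul2l; [rewrite lee_fin Fm_ge0|exact: Hf].
Qed.

Lemma stepE_le1 g :
  (forall t, wait_dom dl t -> forall s', 0 <= g t s' (delay_exp C D s dl t s') false) ->
  (forall t, wait_dom dl t -> forall s', g t s' (delay_exp C D s dl t s') false <= 1) ->
  (forall r, dl = r%:E -> forall s', g r s' (delay_fix C D s') true <= 1) ->
  measurable_fun (wait_dom dl) (exp_part D g s dl) -> stepE C D g s dl <= 1.
Proof.
move=> g0 g1 gf1 mg; have le_pdf := integral_exp_part_le_pdf g0 g1 mg.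
have mpdf : measurable_fun setT (fun t => (exponential_pdf (lam C) t)%:E).
  by apply/measurable_EFinP; exact: measurable_exponential_pdf.
have pdf0 t : 0 <= (exponential_pdf (lam C) t)%:E.
  by rewrite lee_fin exponential_pdf_ge0 // ltW // lam_gt0.
rewrite stepE_split; case E: dl le_pdf => [r| |] le_pdf; first last.
- by case: Hdl; rewrite E => // -[].
- rewrite adde0; apply: le_trans le_pdf _.
  rewrite -(integral_exponential_pdf lam_gt0).
  by apply: ge0_subset_integral => //; exact: measurable_wait_dom.
have [r0 sF] := wf_config_finE E.
apply: le_trans (leeD le_pdf (fix_part_le1 sF (gf1 r E))) _.
have [->|r_gt0] := eqVneq r 0%R.
  rewrite (_ : wait_dom 0%:E = set0) ?integral_set0 ?add0e.
    by rewrite mulr0 oppr0 expR0.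
  by apply/seteqP; split => t //= /andP[t0 /(le_lt_trans t0)]; rewrite ltxx.
apply: le_trans (_ : exponential_prob (lam C) `[0%R, r] + (expR (- (lam C * r)))%:E <= _).
  apply: leeD => //; apply: ge0_subset_integral => //; first exact: measurable_wait_dom.
  - exact: measurable_funTS.
  - by move=> t /= /andP[t0 tr]; rewrite in_itv /= t0 ltW.
by rewrite exponential_prob_itv0c ?lt_neqAle 1?eq_sym ?r_gt0 // mulNr -EFinB -EFinD subrK.
Qed.

Lemma stepE_lin g0 (gx : S -> R -> S -> \bar R -> bool -> \bar R) (k : S -> \bar R) :
  (forall x, 0 <= k x) ->
  (forall t, wait_dom dl t -> forall s', 0 <= g0 t s' (delay_exp C D s dl t s') false) ->
  (forall x t, wait_dom dl t -> forall s',
     0 <= gx x t s' (delay_exp C D s dl t s') false) ->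
  (forall r, dl = r%:E -> forall s', 0 <= g0 r s' (delay_fix C D s') true) ->
  (forall x r, dl = r%:E -> forall s', 0 <= gx x r s' (delay_fix C D s') true) ->
  measurable_fun (wait_dom dl) (exp_part D g0 s dl) ->
  (forall x, measurable_fun (wait_dom dl) (exp_part D (gx x) s dl)) ->
  stepE C D (fun t s' dl' fx => g0 t s' dl' fx + \sum_x k x * gx x t s' dl' fx) s dl =
  stepE C D g0 s dl + \sum_x k x * stepE C D (gx x) s dl.
Proof.
move=> k0 g0e gxe g0f gxf m0 mx.
rewrite !stepE_split integral_exp_part_lin //; case E: dl => [r| |]; rewrite ?adde0 //.
have [_ sF] := wf_config_finE E.
have f0 : 0 <= fix_part D g0 s r by apply: (fix_part_ge0 E) => s'; exact: g0f.
have fx x : 0 <= fix_part D (gx x) s r by apply: (fix_part_ge0 E) => s'; exact: gxf.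
have ix x : 0 <= \int[mu]_(t in wait_dom r%:E) exp_part D (gx x) s r%:E t.
  by apply: integral_ge0 => t; rewrite -E => Ht; apply: exp_part_ge0; exact: gxe.
rewrite /fix_part ge0_weighted_sum_lin ?lee_fin ?expR_ge0 //; first last.
- by move=> x y; exact: gxf.
- by move=> y; exact: g0f.
- by move=> y; rewrite lee_fin Fm_ge0.
rewrite -!/(fix_part _ _ _ _) addeACA -big_split /=; congr (_ + _).
by apply: eq_bigr => x _; rewrite (ge0_muleDr _ (ix x) (fx x)).
Qed.

End StepBounds.

(** * Costs stopped at the first visit to a set *)

Definition admissible_cost (c : S -> R -> S -> bool -> \bar R) :=
  (forall s t s' fx, (0 <= t)%R -> 0 <= c s t s' fx) /\
  (forall s s' fx, measurable_fun setT (fun t => c s t s' fx)).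

Definition stop_cont (c : S -> R -> S -> bool -> \bar R) (G : pred S)
    (h : S -> \bar R) (q : S -> \bar R -> \bar R) s :=
  fun t s' dl' fx => c s t s' fx + (if G s' then h s' else q s' dl').

(* Expected cost [c] of at most [n] transitions of [C(D)] from [(s, dl)], stopped at the
   first visit to [G], plus the reward [h x] when [G] is first entered at [x]. *)
Fixpoint stopped_cost D c (G : pred S) (h : S -> \bar R) n s dl : \bar R :=
  if n is n'.+1 then stepE C D (stop_cont c G h (stopped_cost D c G h n') s) s dl
  else 0.

Lemma stopped_costS D c G h n s dl : stopped_cost D c G h n.+1 s dl =
  stepE C D (stop_cont c G h (stopped_cost D c G h n) s) s dl.
Proof. by []. Qed.

Lemma measurable_exp_part_fin D c G h q s : admissible_cost c ->
  (forall s', measurable_fun setT (fun r : R => q s' r%:E)) ->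
  measurable_fun setT (fun p : R * R => exp_part D (stop_cont c G h q s) s p.1%:E p.2).
Proof.
move=> [_ mc] mq; apply: emeasurable_funM.
  exact: measurableT_comp measurable_exp_density measurable_snd.
apply: emeasurable_sum => s'; apply: emeasurable_funM => //.
apply: emeasurable_funD; first exact: measurableT_comp (mc s s' false) measurable_snd.
case: (G s') => //; rewrite /delay_exp.
have [s'F|s'F] := boolP (s' \in SF); last exact: measurable_cst.
have [sF|sF] := boolP (s \in SF); last exact: measurable_cst.
apply: measurableT_comp (mq s') _.
exact: measurable_funB.
Qed.

Lemma measurable_exp_part D c G h q s dl : admissible_cost c ->
  (forall s', measurable_fun setT (fun r : R => q s' r%:E)) ->
  measurable_fun setT (exp_part D (stop_cont c G h q s) s dl).
Proof.
move=> cD mq; case: dl => [r| |].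
- have -> : exp_part D (stop_cont c G h q s) s r%:E =
    (fun p : R * R => exp_part D (stop_cont c G h q s) s p.1%:E p.2) \o pair r by [].
  by apply: measurableT_comp; [exact: measurable_exp_part_fin|exact: measurable_fun_pair].
all: case: cD => _ mc; apply: emeasurable_funM; first exact: measurable_exp_density.
all: apply: emeasurable_sum => s'; apply: emeasurable_funM => //.
all: apply: emeasurable_funD; first exact: mc.
all: case: (G s') => //.
- have -> : (fun t => q s' (delay_exp C D s +oo t s')) = cst (q s' (delay_exp C D s +oo 0 s')).
    by apply: funext => t; rewrite /delay_exp.
  exact: measurable_cst.
- have -> : (fun t => q s' (delay_exp C D s -oo t s')) = cst (q s' (delay_exp C D s -oo 0 s')).
    by apply: funext => t; rewrite /delay_exp.
  exact: measurable_cst.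
Qed.

Definition wait_region : set (R * R) := [set p | (0 <= p.2)%R && (p.2 < p.1)%R].

Lemma measurable_wait_region : measurable wait_region.
Proof.
have -> : wait_region = (setT `&` snd @^-1` `[0%R, +oo[) `&`
                        (setT `&` (fun p : R * R => p.1 - p.2)%R @^-1` `]0%R, +oo[).
  apply/seteqP; split => -[r t] /=; rewrite /wait_region /= !in_itv /= !andbT subr_gt0.
    by move=> /andP[-> ->].
  by move=> [[_ ->] [_ ->]].
apply: measurableI; first by apply: measurable_snd => //; exact: measurable_itv.
by apply: (measurable_funB measurable_fst measurable_snd) => //; exact: measurable_itv.
Qed.

Section StoppedCost.
Context {D : S -> R} {c : S -> R -> S -> bool -> \bar R} {G : pred S} {h : S -> \bar R}.
Hypotheses (cD : admissible_cost c) (h0 : forall x, 0 <= h x) (HD : delay_fun C D).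

Lemma stopped_cost_ge0 n s dl : wf_config s dl -> 0 <= stopped_cost D c G h n s dl.
Proof.
elim: n s dl => [//|n IH] s dl Hv /=; apply: stepE_ge0 => //.
- move=> t Ht s'; apply: adde_ge0; first by apply: cD.1; exact: wait_dom_ge0 Ht.
  by case: (G s') => //; apply/IH/wf_config_exp.
- move=> r Er s'; apply: adde_ge0; last by case: (G s') => //; apply/IH/wf_config_fix.
  by apply: cD.1; move: Hv; rewrite Er => /wf_config_fin[].
Qed.

Lemma stop_cont_exp_ge0 n s dl t s' : wf_config s dl -> wait_dom dl t ->
  0 <= stop_cont c G h (stopped_cost D c G h n) s t s' (delay_exp C D s dl t s') false.
Proof.
move=> Hv Ht; apply: adde_ge0; first by apply: cD.1; exact: wait_dom_ge0 Ht.
by case: (G s') => //; apply/stopped_cost_ge0/wf_config_exp.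
Qed.

Lemma stop_cont_fix_ge0 n s r s' : (0 <= r)%R ->
  0 <= stop_cont c G h (stopped_cost D c G h n) s r s' (delay_fix C D s') true.
Proof.
move=> r0; apply: adde_ge0; first exact: cD.1.
by case: (G s') => //; apply/stopped_cost_ge0/wf_config_fix.
Qed.

(* Tonelli: the exp-delay part is an integral over [wait_region] of a jointly measurable
   function of the initial delay and the waiting time. *)
Lemma measurable_stopped_cost n s :
  measurable_fun setT (fun r : R => stopped_cost D c G h n s r%:E).
Proof.
elim: n s => [|n IH] s; first exact: measurable_cst.
set g := stop_cont c G h (stopped_cost D c G h n) s.
set f := (fun p : R * R => exp_part D g s p.1%:E p.2) \_ wait_region.
have -> : (fun r : R => stopped_cost D c G h n.+1 s r%:E) =
          (fun r => fubini_F mu f r + fix_part D g s r).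
  apply: funext => r; rewrite stopped_costS stepE_split; congr (_ + _).
  by rewrite integral_mkcond /fubini_F; apply: eq_integral => t _; rewrite /f !patchE.
apply: emeasurable_funD.
  apply: measurable_fun_fubini_tonelli_F.
    apply: (measurable_restrictT _ measurable_wait_region).1.
    by apply: measurable_funTS; exact: measurable_exp_part_fin.
  move=> [r t]; rewrite /f patchE; case: ifPn => // /set_mem /= /andP[t0 tr].
  apply: exp_part_ge0 => s'; apply: adde_ge0; first exact: cD.1.
  by case: (G s') => //; apply/stopped_cost_ge0/wf_config_delay_exp => //=; rewrite t0.
rewrite /fix_part; apply: emeasurable_funM.
  apply/measurable_EFinP; apply: measurableT_comp; first exact: measurable_expR.
  by apply: measurableT_comp => //; exact: measurable_funM.
apply: emeasurable_sum => s'; apply: emeasurable_funM => //.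
by apply: emeasurable_funD; [exact: cD.2|exact: measurable_cst].
Qed.

Lemma measurable_exp_part_stopped n s dl :
  measurable_fun (wait_dom dl) (exp_part D (stop_cont c G h (stopped_cost D c G h n) s) s dl).
Proof.
apply: measurable_funTS; apply: measurable_exp_part => // s'.
exact: measurable_stopped_cost.
Qed.

Lemma stopped_cost_leS n s dl : wf_config s dl ->
  stopped_cost D c G h n s dl <= stopped_cost D c G h n.+1 s dl.
Proof.
elim: n s dl => [|n IH] s dl Hv; first exact: stopped_cost_ge0.
rewrite stopped_costS [leRHS]stopped_costS; apply: le_stepE => //.
- by move=> t Ht s'; exact: stop_cont_exp_ge0.
- exact: measurable_exp_part_stopped.
- exact: measurable_exp_part_stopped.
- by move=> t Ht s' _; apply: leeD => //; case: (G s') => //; apply/IH/wf_config_exp.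
- by move=> r Er s' _; apply: leeD => //; case: (G s') => //; apply/IH/wf_config_fix.
Qed.

Lemma nondecreasing_stopped_cost s dl : wf_config s dl ->
  nondecreasing_seq (fun n => stopped_cost D c G h n s dl).
Proof.
move=> Hv m n /subnKC <-; elim: (n - m)%N => [|k IH]; first by rewrite addn0.
by rewrite addnS; exact: le_trans IH (stopped_cost_leS _ Hv).
Qed.

End StoppedCost.

Definition no_cost : S -> R -> S -> bool -> \bar R := fun _ _ _ _ => 0.

Definition hit_reward x : S -> \bar R := fun y => if y == x then 1 else 0.

Lemma admissible_no_cost : admissible_cost no_cost.
Proof. by split => // s s' fx; exact: measurable_cst. Qed.

Lemma hit_reward_ge0 x y : 0 <= hit_reward x y.
Proof. by rewrite /hit_reward; case: ifP. Qed.

Lemma hit_reward_le1 x y : hit_reward x y <= 1.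
Proof. by rewrite /hit_reward; case: ifP; rewrite ?lee01. Qed.

Lemma stopped_cost_no_cost0 D G n s dl : stopped_cost D no_cost G (fun=> 0) n s dl = 0.
Proof.
elim: n s dl => [//|n IH] s dl; rewrite -[RHS](stepE0 D s dl) stopped_costS.
by apply: eq_stepE => [t _|r _] s' _; rewrite /stop_cont add0e; case: (G s') => //; exact: IH.
Qed.

Lemma stopped_cost_le1 {D G h} : delay_fun C D -> (forall x, 0 <= h x) ->
  (forall x, h x <= 1) ->
  forall n s dl, wf_config s dl -> stopped_cost D no_cost G h n s dl <= 1.
Proof.
move=> HD h0 h1; elim=> [|n IH] s dl Hv; first exact: lee01.
rewrite stopped_costS; apply: stepE_le1 => //.
- by move=> t Ht s'; exact: (stop_cont_exp_ge0 admissible_no_cost h0 HD n s' Hv Ht).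
- move=> t Ht s'; rewrite /stop_cont add0e; case: (G s') => //.
  by apply/IH/wf_config_exp.
- by move=> r Er s'; rewrite /stop_cont add0e; case: (G s') => //; apply/IH/wf_config_fix.
- exact: (measurable_exp_part_stopped admissible_no_cost h0 HD n s).
Qed.

(* The reward enters linearly: [h] is paid once, at the state where [G] is entered. *)
Lemma stopped_cost_reward_lin {D c G h} : admissible_cost c -> (forall x, 0 <= h x) ->
  delay_fun C D -> forall n s dl, wf_config s dl ->
  stopped_cost D c G h n s dl = stopped_cost D c G (fun=> 0) n s dl +
    \sum_x h x * stopped_cost D no_cost G (hit_reward x) n s dl.
Proof.
move=> cD h0 HD; elim=> [|n IH] s dl Hv.
  by rewrite /= big1 ?adde0 // => x _; rewrite mule0.
have split_cont s' dl' (Hv' : wf_config s' dl') t fx :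
    stop_cont c G h (stopped_cost D c G h n) s t s' dl' fx =
    stop_cont c G (fun=> 0) (stopped_cost D c G (fun=> 0) n) s t s' dl' fx +
    \sum_x h x * stop_cont no_cost G (hit_reward x)
                  (stopped_cost D no_cost G (hit_reward x) n) s t s' dl' fx.
  rewrite /stop_cont /no_cost; case: (G s').
    rewrite adde0 (bigD1 s') //= /hit_reward eqxx add0e mule1 big1 ?adde0 // => x.
    by rewrite eq_sym => /negbTE ->; rewrite add0e mule0.
  by rewrite IH // addeA; congr (_ + _); apply: eq_bigr => x _; rewrite add0e.
rewrite stopped_costS (eq_stepE (D2 := D) (g2 := fun t s' dl' fx =>
    stop_cont c G (fun=> 0) (stopped_cost D c G (fun=> 0) n) s t s' dl' fx +
    \sum_x h x * stop_cont no_cost G (hit_reward x)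
                  (stopped_cost D no_cost G (hit_reward x) n) s t s' dl' fx)); last 2 first.
- by move=> t Ht s' _; apply/split_cont/wf_config_exp.
- by move=> r _ s' _; apply/split_cont/wf_config_fix.
have cN := admissible_no_cost; have h00 : forall x : S, 0 <= (fun=> 0 : \bar R) x by [].
have r0 r : dl = r%:E -> (0 <= r)%R by move=> Er; move: Hv; rewrite Er => /wf_config_fin[].
apply: stepE_lin => //.
- by move=> t Ht s'; exact: (stop_cont_exp_ge0 cD h00 HD n s' Hv Ht).
- by move=> x t Ht s'; exact: (stop_cont_exp_ge0 cN (hit_reward_ge0 x) HD n s' Hv Ht).
- by move=> r Er s'; exact: (stop_cont_fix_ge0 cD h00 HD n s s' (r0 r Er)).
- by move=> x r Er s'; exact: (stop_cont_fix_ge0 cN (hit_reward_ge0 x) HD n s s' (r0 r Er)).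
- exact: (measurable_exp_part_stopped cD h00 HD n s).
- by move=> x; exact: (measurable_exp_part_stopped cN (hit_reward_ge0 x) HD n s).
Qed.

Lemma costN_stopped_cost D G n s dl :
  costN C K D G n s dl = stopped_cost D (trans_cost K) G (fun=> 0) n s dl.
Proof.
elim: n s dl => [//|n IH] s dl /=; congr stepE.
by apply: funext => t; apply: funext => s'; apply: funext => dl'; apply: funext => fx; rewrite IH.
Qed.

Lemma reachN_stopped_cost D G n s dl :
  reachN C D G n s dl = stopped_cost D no_cost G (fun=> 1) n s dl.
Proof.
elim: n s dl => [//|n IH] s dl /=; congr stepE.
apply: funext => t; apply: funext => s'; apply: funext => dl'; apply: funext => fx.
by rewrite IH /stop_cont add0e.
Qed.

Lemma hitN_stopped_cost D G x n s dl :
  hitN C D G x n s dl = stopped_cost D no_cost G (hit_reward x) n s dl.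
Proof.
elim: n s dl => [//|n IH] s dl /=; congr stepE.
apply: funext => t; apply: funext => s'; apply: funext => dl'; apply: funext => fx.
by rewrite IH /stop_cont add0e.
Qed.

(** * Visits to S' *)

Local Notation Sp := (Sprime C K).

Definition goalp : pred S := fun s => s \in Goal K.

Lemma goal_Sprime s : goalp s -> Sp s.
Proof. by rewrite /Sprime /goalp => ->; rewrite orbT. Qed.

Lemma Pm_gt0 s s' : Pm C s s' != 0%R -> (0 < Pm C s s')%R.
Proof. by move=> nz; rewrite lt_neqAle eq_sym nz Pm_ge0. Qed.

Lemma exp_step_notSprime s s' : Pm C s s' != 0%R -> ~~ Sp s' -> s \in SF /\ s' \in SF.
Proof.
move=> nz; rewrite /Sprime !negb_or negbK => /andP[/andP[nR s'F] _]; split => //.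
apply/negPn/negP => sF; move: nR; rewrite /Sreset s'F /=.
by move/negP; apply; apply/orP; left; apply/existsP; exists s; rewrite sF Pm_gt0.
Qed.

Lemma fix_step_Sprime s s' : s \in SF -> Fm C s s' != 0%R -> Sp s'.
Proof.
move=> sF nz; have [s'F|s'F] := boolP (s' \in SF); last by rewrite /Sprime s'F orbT.
apply/orP; left; apply/orP; left; rewrite /Sreset s'F /=; apply/orP; right.
by apply/existsP; exists s; rewrite sF lt_neqAle eq_sym nz Fm_ge0.
Qed.

(* Before [S'] is reached, the run moves inside [S_fd] by exp-delay transitions only, which
   never consult the delay function. *)
Lemma eq_stopped_cost_Sprime D1 D2 c h : delay_fun C D1 -> forall n s dl,
  wf_config s dl -> stopped_cost D1 c Sp h n s dl = stopped_cost D2 c Sp h n s dl.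
Proof.
move=> HD; elim=> [//|n IH] s dl Hv; rewrite !stopped_costS.
apply: eq_stepE => [t Ht s' nz|r Er s' nz].
  rewrite /stop_cont; have [//|HA] := boolP (Sp s').
  have [sF s'F] := exp_step_notSprime nz HA.
  have -> : delay_exp C D2 s dl t s' = delay_exp C D1 s dl t s'.
    by rewrite /delay_exp sF s'F.
  by rewrite IH //; exact: wf_config_exp.
by move: Hv; rewrite Er => /wf_config_fin[_ sF]; rewrite /stop_cont (fix_step_Sprime sF nz).
Qed.

Lemma stopped_hit_notSprime x D : ~~ Sp x ->
  forall n s dl, stopped_cost D no_cost Sp (hit_reward x) n s dl = 0.
Proof.
move=> nAx; elim=> [//|n IH] s dl; rewrite -[RHS](stepE0 D s dl) stopped_costS.
apply: eq_stepE => [t _|r _] s' _; rewrite /stop_cont /no_cost add0e.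
all: have [HA|] := boolP (Sp s'); last by rewrite IH.
all: by rewrite /hit_reward; case: eqP => // E; rewrite -E HA in nAx.
Qed.

Hypothesis HS : standing_assumption C.

(* An exp-delay transition into [S^reset] cannot start in [S_fd], as [S^reset] and [S^keep]
   are disjoint. *)
Lemma delay_exp_Sprime D s dl t s' : Pm C s s' != 0%R -> Sp s' -> ~~ goalp s' ->
  delay_exp C D s dl t s' = init_delay C D s'.
Proof.
rewrite /goalp => nz HA /negbTE nG; move: HA; rewrite /Sprime nG orbF.
rewrite /delay_exp /init_delay; have [s'F|//] := boolP (s' \in SF).
rewrite orbF => HR; have [sF|//] := boolP (s \in SF).
case: HS => _ [Hdis _]; move: (Hdis s'); rewrite HR /= /Skeep s'F /=.
by move/negP; case; apply/existsP; exists s; rewrite sF Pm_gt0.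
Qed.

(** * Comparison of C(d) with M(d) *)

Section FixedDelay.
Variable d : S -> R.
Hypothesis Hd : delay_fun C d.
Local Notation fresh s := (init_delay C d s).
Local Notation Qd := (stopped_cost d).

Lemma wf_fresh s : wf_config s (fresh s).
Proof. exact: wf_config_init. Qed.

Definition trans_prob s x :=
  ereal_sup (range (fun n => Qd no_cost Sp (hit_reward x) n s (fresh s))).

Lemma init_delay_at s : init_delay C (delay_at s (strat C d s)) s = fresh s.
Proof. by rewrite /init_delay /delay_at eqxx /strat; case: (s \in SF). Qed.

Lemma stopped_cost_delay_at c h n s :
  stopped_cost (delay_at s (strat C d s)) c Sp h n s (fresh s) = Qd c Sp h n s (fresh s).
Proof. by symmetry; apply: eq_stopped_cost_Sprime => //; exact: wf_fresh. Qed.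

Lemma Tm_trans_prob s x : Tm C K s (strat C d s) x = trans_prob s x.
Proof.
have hitE n : hitN C (delay_at s (strat C d s)) Sp x n s (fresh s) =
               Qd no_cost Sp (hit_reward x) n s (fresh s).
  by rewrite hitN_stopped_cost stopped_cost_delay_at.
by rewrite /Tm init_delay_at (eq_fun hitE).
Qed.

Lemma cm_stopped_cost s : cm C K s (strat C d s) =
  if ereal_sup (range (fun n => Qd no_cost Sp (fun=> 1) n s (fresh s))) < 1 then +oo
  else ereal_sup (range (fun n => Qd (trans_cost K) Sp (fun=> 0) n s (fresh s))).
Proof.
rewrite /cm /ExpCost /ExpCostFrom init_delay_at.
have reachE n : reachN C (delay_at s (strat C d s)) Sp n s (fresh s) =
                Qd no_cost Sp (fun=> 1) n s (fresh s).
  by rewrite reachN_stopped_cost stopped_cost_delay_at.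
have costE n : costN C K (delay_at s (strat C d s)) Sp n s (fresh s) =
               Qd (trans_cost K) Sp (fun=> 0) n s (fresh s).
  by rewrite costN_stopped_cost stopped_cost_delay_at.
by rewrite (eq_fun reachE) (eq_fun costE).
Qed.

Lemma hit_ge0 x n s : 0 <= Qd no_cost Sp (hit_reward x) n s (fresh s).
Proof. exact: (stopped_cost_ge0 admissible_no_cost (hit_reward_ge0 x) Hd n (wf_fresh s)). Qed.

Lemma hit_le1 x n s : Qd no_cost Sp (hit_reward x) n s (fresh s) <= 1.
Proof. exact: (stopped_cost_le1 Hd (hit_reward_ge0 x) (hit_reward_le1 x) n (wf_fresh s)). Qed.

Lemma nondecreasing_hit x s :
  nondecreasing_seq (fun n => Qd no_cost Sp (hit_reward x) n s (fresh s)).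
Proof.
exact: (nondecreasing_stopped_cost admissible_no_cost (hit_reward_ge0 x) Hd (wf_fresh s)).
Qed.

Lemma trans_prob_ge0 s x : 0 <= trans_prob s x.
Proof. by apply: ereal_sup_range_ge0 => n; exact: hit_ge0. Qed.

Lemma trans_prob_le1 s x : trans_prob s x <= 1.
Proof. by apply: ereal_sup_range_le => n; exact: hit_le1. Qed.

Fixpoint mdp_cost (cM : S -> \bar R) (a : \bar R) n s : \bar R :=
  if n is n'.+1 then
    cM s + \sum_(x | Sp x) trans_prob s x * (if goalp x then a else mdp_cost cM a n' x)
  else 0.

Lemma costM_mdp_cost n s : costM C K d n s = mdp_cost (fun s => cm C K s (strat C d s)) 0 n s.
Proof.
by elim: n s => [//|n IH] s /=; congr (_ + _); apply: eq_bigr => x _; rewrite Tm_trans_prob IH.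
Qed.

Lemma reachM_mdp_cost n s : reachM C K d n s = mdp_cost (fun=> 0) 1 n s.
Proof.
by elim: n s => [//|n IH] s /=; rewrite add0e; apply: eq_bigr => x _; rewrite Tm_trans_prob IH.
Qed.

Lemma mdp_cost_ge0 cM a : (forall s, 0 <= cM s) -> 0 <= a -> forall n s, 0 <= mdp_cost cM a n s.
Proof.
move=> cM0 a0; elim=> [//|n IH] s /=; apply: adde_ge0 => //.
by apply: sume_ge0 => x _; apply: mule_ge0; [exact: trans_prob_ge0|case: (goalp x)].
Qed.

Lemma stopped_cost_Sprime_decomp c H n s dl : admissible_cost c -> (forall x, 0 <= H x) ->
  wf_config s dl ->
  Qd c Sp H n s dl = Qd c Sp (fun=> 0) n s dl +
    \sum_(x | Sp x) H x * Qd no_cost Sp (hit_reward x) n s dl.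
Proof.
move=> cD H0 Hv; rewrite (stopped_cost_reward_lin cD H0 Hd n Hv); congr (_ + _).
rewrite [RHS]big_mkcond; apply: eq_bigr => x _; case: ifPn => // nA.
by rewrite stopped_hit_notSprime // mule0.
Qed.

(* Strong Markov property at [S' \ G], in both directions: a run of [C(d)] entering
   [x \in S' \ G] continues as a fresh run of [C(d)] from [x]. *)
Lemma goal_cost_le_Sprime_cost c a (hS : S -> \bar R) n :
  admissible_cost c -> 0 <= a -> (forall x, 0 <= hS x) ->
  (forall x, Sp x -> ~~ goalp x -> Qd c goalp (fun=> a) n x (fresh x) <= hS x) ->
  forall k s dl, (k <= n.+1)%N -> wf_config s dl ->
  Qd c goalp (fun=> a) k s dl <= Qd c Sp (fun x => if goalp x then a else hS x) k s dl.
Proof.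
move=> cD a0 hS0 hSn; set H := fun x => if goalp x then a else hS x.
have H0 x : 0 <= H x by rewrite /H; case: ifP.
have ndx x : Sp x -> ~~ goalp x -> forall k, (k <= n)%N ->
    Qd c goalp (fun=> a) k x (fresh x) <= H x.
  move=> HA nG k kn; rewrite /H (negbTE nG); apply: le_trans (hSn _ HA nG).
  exact: (nondecreasing_stopped_cost cD (fun=> a0) Hd (wf_fresh x) kn).
elim=> [//|k IH] s dl kn Hv; rewrite !stopped_costS; apply: le_stepE => //.
- by move=> t Ht s'; exact: (stop_cont_exp_ge0 cD (fun=> a0) Hd k s' Hv Ht).
- exact: (measurable_exp_part_stopped cD (fun=> a0) Hd k s).
- exact: (measurable_exp_part_stopped cD H0 Hd k s).
- move=> t Ht s' nz; apply: leeD => //.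
  have [G'|nG] := boolP (goalp s'); first by rewrite (goal_Sprime G') /H G'.
  have [HA|nA] := boolP (Sp s'); last by apply: IH (ltnW kn) _; exact: wf_config_exp.
  by rewrite (delay_exp_Sprime _ _ _ nz HA nG); exact: ndx.
- move=> r Er s' nz; apply: leeD => //.
  have [G'|nG] := boolP (goalp s'); first by rewrite (goal_Sprime G') /H G'.
  have [HA|nA] := boolP (Sp s'); last by apply: IH (ltnW kn) _; exact: wf_config_fix.
  exact: ndx.
Qed.

Lemma Sprime_cost_le_goal_cost c a m : admissible_cost c -> 0 <= a ->
  forall k s dl, wf_config s dl ->
  Qd c Sp (fun x => if goalp x then a else Qd c goalp (fun=> a) m x (fresh x)) k s dl <=
  Qd c goalp (fun=> a) (k + m) s dl.
Proof.
move=> cD a0; set H := fun x => if goalp x then a else Qd c goalp (fun=> a) m x (fresh x).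
have H0 x : 0 <= H x.
  by rewrite /H; case: ifP => // _; exact: (stopped_cost_ge0 cD (fun=> a0) Hd m (wf_fresh x)).
have ndx x k : Sp x -> ~~ goalp x -> H x <= Qd c goalp (fun=> a) (k + m) x (fresh x).
  move=> _ nG; rewrite /H (negbTE nG).
  exact: (nondecreasing_stopped_cost cD (fun=> a0) Hd (wf_fresh x) (leq_addl k m)).
elim=> [|k IH] s dl Hv; first exact: (stopped_cost_ge0 cD (fun=> a0) Hd _ Hv).
rewrite addSn !stopped_costS; apply: le_stepE => //.
- by move=> t Ht s'; exact: (stop_cont_exp_ge0 cD H0 Hd k s' Hv Ht).
- exact: (measurable_exp_part_stopped cD H0 Hd k s).
- exact: (measurable_exp_part_stopped cD (fun=> a0) Hd (k + m) s).
- move=> t Ht s' nz; apply: leeD => //.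
  have [G'|nG] := boolP (goalp s'); first by rewrite (goal_Sprime G') /H G'.
  have [HA|nA] := boolP (Sp s'); last exact/IH/wf_config_exp.
  by rewrite (delay_exp_Sprime _ _ _ nz HA nG); exact: ndx.
- move=> r Er s' nz; apply: leeD => //.
  have [G'|nG] := boolP (goalp s'); first by rewrite (goal_Sprime G') /H G'.
  have [HA|nA] := boolP (Sp s'); last exact/IH/wf_config_fix.
  exact: ndx.
Qed.

Lemma stopped_cost_le_mdp_cost c a cM : admissible_cost c -> 0 <= a ->
  (forall s, 0 <= cM s) -> (forall n s, Qd c Sp (fun=> 0) n s (fresh s) <= cM s) ->
  forall n s, Qd c goalp (fun=> a) n s (fresh s) <= mdp_cost cM a n s.
Proof.
move=> cD a0 cM0 cMb; elim=> [//|n IH] s.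
have mdp0 := mdp_cost_ge0 cM0 a0 n.
apply: le_trans (goal_cost_le_Sprime_cost cD a0 mdp0 (fun x _ _ => IH x) (leqnn _)
  (wf_fresh s)) _.
have H0 x : 0 <= (if goalp x then a else mdp_cost cM a n x) by case: ifP.
rewrite (stopped_cost_Sprime_decomp n.+1 cD H0 (wf_fresh s)) [mdp_cost _ _ _ _]/=.
apply: leeD; first exact: cMb.
apply: lee_sum => x _; rewrite muleC; apply: lee_wpmul2r; first exact: H0.
exact: ereal_sup_range_ub.
Qed.

Definition value c a x := ereal_sup (range (fun m => Qd c goalp (fun=> a) m x (fresh x))).

Lemma value_ge0 c a x : admissible_cost c -> 0 <= a -> 0 <= value c a x.
Proof.
move=> cD a0; apply: ereal_sup_range_ge0 => m.
exact: (stopped_cost_ge0 cD (fun=> a0) Hd m (wf_fresh x)).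
Qed.

Lemma value_ge_bellman c a s : admissible_cost c -> 0 <= a ->
  ereal_sup (range (fun m => Qd c Sp (fun=> 0) m s (fresh s))) +
  \sum_(x | Sp x) trans_prob s x * (if goalp x then a else value c a x) <= value c a s.
Proof.
move=> cD a0.
pose e x m := if goalp x then a else Qd c goalp (fun=> a) m x (fresh x).
have e0 x m : 0 <= e x m.
  by rewrite /e; case: ifP => // _; exact: (stopped_cost_ge0 cD (fun=> a0) Hd m (wf_fresh x)).
have nde x : nondecreasing_seq (e x).
  by move=> m n mn; rewrite /e; case: ifP => // _;
    exact: (nondecreasing_stopped_cost cD (fun=> a0) Hd (wf_fresh x) mn).
pose b x m := Qd no_cost Sp (hit_reward x) m s (fresh s).
have ndbe x : nondecreasing_seq (fun m => b x m * e x m).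
  by move=> m n mn; apply: lee_pmul => //; [exact: hit_ge0|exact: nondecreasing_hit|exact: nde].
have be0 x m : 0 <= b x m * e x m by apply: mule_ge0; [exact: hit_ge0|exact: e0].
have supbe x : trans_prob s x * (if goalp x then a else value c a x) =
               ereal_sup (range (fun m => b x m * e x m)).
  rewrite ereal_sup_rangeM //; last 3 first.
  - exact: nondecreasing_hit.
  - by move=> m; exact: hit_ge0.
  - by move=> m; exact: hit_le1.
  by rewrite /e /value; case: ifP => // _; rewrite ereal_sup_range_cst.
rewrite (eq_bigr _ (fun x _ => supbe x)) -ereal_sup_range_sum // -ereal_sup_rangeD //.
- apply: ereal_sup_range_le => m.
  apply: le_trans (ereal_sup_range_ub _ (m + m)).
  apply: le_trans (Sprime_cost_le_goal_cost m cD a0 m (wf_fresh s)).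
  rewrite [X in _ <= X](stopped_cost_Sprime_decomp _ cD (fun x => e0 x m) (wf_fresh s)).
  by apply: leeD => //; apply: lee_sum => x _; rewrite muleC.
- exact: (nondecreasing_stopped_cost cD (fun=> lexx 0) Hd (wf_fresh s)).
- by move=> m n mn; apply: lee_sum => x _; exact: ndbe.
- by move=> m; exact: (stopped_cost_ge0 cD (fun=> lexx 0) Hd m (wf_fresh s)).
- by move=> m; apply: sume_ge0 => x _; exact: be0.
Qed.

Lemma mdp_cost_le_value c a cM (P : pred S) : admissible_cost c -> 0 <= a ->
  (forall s x, P s -> Sp x -> ~~ goalp x -> trans_prob s x != 0 -> P x) ->
  (forall s, P s -> cM s <= ereal_sup (range (fun m => Qd c Sp (fun=> 0) m s (fresh s)))) ->
  forall n s, P s -> mdp_cost cM a n s <= value c a s.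
Proof.
move=> cD a0 Pclosed cMb; elim=> [|n IH] s Ps; first exact: value_ge0.
apply: le_trans (value_ge_bellman s cD a0); apply: leeD; first exact: cMb.
apply: lee_sum => x Ax; case: ifPn => // nG.
have [->|Tnz] := eqVneq (trans_prob s x) 0; first by rewrite !mul0e.
by apply: lee_wpmul2l; [exact: trans_prob_ge0|exact/IH/(Pclosed s)].
Qed.

Lemma sup_mdp_reach s :
  ereal_sup (range (fun n => mdp_cost (fun=> 0) 1 n s)) = value no_cost 1 s.
Proof.
have cN := admissible_no_cost.
apply/le_anti/andP; split.
  apply: ereal_sup_range_le => n; apply: (mdp_cost_le_value (P := predT)) => // x _.
  apply: ereal_sup_range_ge0 => m.
  exact: (stopped_cost_ge0 cN (fun=> lexx 0) Hd m (wf_fresh x)).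
apply: le_ereal_sup_range => n; apply: stopped_cost_le_mdp_cost => // m x.
by rewrite stopped_cost_no_cost0.
Qed.

Lemma reach_value_le1 x : value no_cost 1 x <= 1.
Proof.
apply: ereal_sup_range_le => m.
exact: (stopped_cost_le1 Hd (fun=> lee01) (fun=> lexx 1) m (wf_fresh _)).
Qed.

Lemma trans_prob_sum_le1 s : \sum_(x | Sp x) trans_prob s x <= 1.
Proof.
rewrite -ereal_sup_range_sum; last 2 first.
- by move=> x; exact: nondecreasing_hit.
- by move=> x n; exact: hit_ge0.
apply: ereal_sup_range_le => m.
have := stopped_cost_Sprime_decomp m admissible_no_cost (fun=> lee01) (wf_fresh s).
rewrite stopped_cost_no_cost0 add0e (eq_bigr _ (fun x _ => mul1e _)) => <-.
exact: (stopped_cost_le1 Hd (fun=> lee01) (fun=> lexx 1) m (wf_fresh _)).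
Qed.

Lemma reach_value_le_bellman s :
  value no_cost 1 s <= \sum_(x | Sp x) trans_prob s x * (if goalp x then 1 else value no_cost 1 x).
Proof.
rewrite -sup_mdp_reach; apply: ereal_sup_range_le => -[|n] /=.
  apply: sume_ge0 => x _; apply: mule_ge0; first exact: trans_prob_ge0.
  by case: ifP => // _; apply: value_ge0; [exact: admissible_no_cost|exact: lee01].
rewrite add0e; apply: lee_sum => x _; apply: lee_wpmul2l; first exact: trans_prob_ge0.
by case: ifP => // _; rewrite -sup_mdp_reach; exact: ereal_sup_range_ub.
Qed.

Definition reaches_goal_as s := ~~ (value no_cost 1 s < 1).

(* If the goal were missed with positive probability from [x], the slack would propagate
   to [s] through the Bellman inequality, since the [trans_prob s] sum to at most 1. *)
Lemma reaches_goal_as_step s x : reaches_goal_as s -> Sp x -> ~~ goalp x ->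
  trans_prob s x != 0 -> reaches_goal_as x.
Proof.
move=> gs Ax nG Tnz; apply/negP => lt; move/negP: gs; apply.
pose H y := if goalp y then 1 else value no_cost 1 y.
have H0 y : 0 <= H y.
  by rewrite /H; case: ifP => // _; apply: value_ge0; [exact: admissible_no_cost|exact: lee01].
have H1 y : H y <= 1 by rewrite /H; case: ifP => // _; exact: reach_value_le1.
apply: le_lt_trans (reach_value_le_bellman s) _; rewrite -/H.
have := trans_prob_sum_le1 s; rewrite !(bigD1 x Ax) /=.
set rest := \sum_(y | Sp y && (y != x)) trans_prob s y => Tle.
have rest_ge : \sum_(y | Sp y && (y != x)) trans_prob s y * H y <= rest.
  apply: lee_sum => y _; rewrite -[leRHS]mule1.
  by apply: lee_wpmul2l; [exact: trans_prob_ge0|exact: H1].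
have Tx0 : 0 < trans_prob s x by rewrite lt_neqAle eq_sym Tnz trans_prob_ge0.
have rest_le1 : rest <= 1.
  by apply: le_trans Tle; rewrite leeDr // ltW.
have sumTH0 : 0 <= \sum_(y | Sp y && (y != x)) trans_prob s y * H y.
  by apply: sume_ge0 => y _; apply: mule_ge0; [exact: trans_prob_ge0|exact: H0].
apply: lt_le_trans Tle; apply: lte_leD => //.
  by rewrite ge0_fin_numE // (le_lt_trans (le_trans rest_ge rest_le1)) ?ltey.
rewrite -[ltRHS]mule1 lte_pmul2l //; first by rewrite /H (negbTE nG).
by rewrite ge0_fin_numE ?trans_prob_ge0 // (le_lt_trans (trans_prob_le1 s x)) ?ltey.
Qed.

Lemma reach_goal_le_reach_Sprime m s dl : wf_config s dl ->
  Qd no_cost goalp (fun=> 1) m s dl <= Qd no_cost Sp (fun=> 1) m s dl.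
Proof.
move=> Hv; have cN := admissible_no_cost.
have hit1 x : Sp x -> ~~ goalp x -> Qd no_cost goalp (fun=> 1) m x (fresh x) <= 1.
  by move=> _ _; exact: (stopped_cost_le1 Hd (fun=> lee01) (fun=> lexx 1) m (wf_fresh x)).
have := goal_cost_le_Sprime_cost cN lee01 (fun=> lee01) hit1 (leqnSn m) Hv.
by rewrite (_ : (fun x => if goalp x then 1 else 1) = fun=> 1) //; apply: funext => x; case: ifP.
Qed.

Lemma cm_reaches_goal_as s : reaches_goal_as s ->
  cm C K s (strat C d s) =
  ereal_sup (range (fun n => Qd (trans_cost K) Sp (fun=> 0) n s (fresh s))).
Proof.
move=> gs; rewrite cm_stopped_cost; case: ifPn => // lt1; move/negP: gs; case.
apply: le_lt_trans lt1; apply: le_ereal_sup_range => m.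
exact: reach_goal_le_reach_Sprime (wf_fresh s).
Qed.

Hypothesis HK : cost_wf K.

Lemma admissible_trans_cost : admissible_cost (trans_cost K).
Proof.
case: HK => Rt0 [IP0 IF0]; split => [s t s' fx t0|s s' fx].
  by rewrite lee_fin addr_ge0 ?mulr_ge0 //; case: fx.
by apply/measurable_EFinP; apply: measurable_funD => //; exact: measurable_funM.
Qed.

Lemma cm_ge0 s : 0 <= cm C K s (strat C d s).
Proof.
rewrite cm_stopped_cost; case: ifPn => // _; apply: ereal_sup_range_ge0 => m.
exact: (stopped_cost_ge0 admissible_trans_cost (fun=> lexx 0) Hd m (wf_fresh s)).
Qed.

Lemma E_C_E_M : E_C C K d = E_M C K d.
Proof.
have cT := admissible_trans_cost.
rewrite /E_C /ExpCost /ExpCostFrom /E_M -/goalp; set s0 := Defs.sin C.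
rewrite (eq_fun (fun n => reachN_stopped_cost d goalp n s0 (fresh s0))).
rewrite (eq_fun (fun n => costN_stopped_cost d goalp n s0 (fresh s0))).
rewrite (eq_fun (fun n => reachM_mdp_cost n s0)) (eq_fun (fun n => costM_mdp_cost n s0)).
rewrite -/(value no_cost 1 _) -/(value (trans_cost K) 0 _) sup_mdp_reach.
case: ifPn => // gs; apply/le_anti/andP; split.
  apply: le_ereal_sup_range => n; apply: stopped_cost_le_mdp_cost => //; first exact: cm_ge0.
  move=> m x; rewrite cm_stopped_cost; case: ifPn => _; first exact: leey.
  exact: ereal_sup_range_ub.
apply: ereal_sup_range_le => n.
apply: (mdp_cost_le_value (P := reaches_goal_as)) => // [s x|s] Ps.
  exact: reaches_goal_as_step.
by rewrite cm_reaches_goal_as.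
Qed.

End FixedDelay.
End Semantics.

Theorem proposition2 (R : realType) (S : finType)
  (C : fdCTMC R S) (K : costStruct R S) :
  fdCTMC_wf C -> cost_wf K -> standing_assumption C ->
  (forall d : S -> R, delay_fun C d -> E_C C K d = E_M C K d) /\
  ereal_inf [set E_C C K d | d in [set d : S -> R | delay_fun C d]] =
  ereal_inf [set E_M C K d | d in [set d : S -> R | delay_fun C d]].
Proof.
move=> HC HK HS; have E d : delay_fun C d -> E_C C K d = E_M C K d.
  by move=> Hd; exact: E_C_E_M.
split => //; congr ereal_inf; apply/seteqP; split => _ [d Hd <-]; exists d => //.
  by rewrite E.
by rewrite -E.
Qed.
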